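(* Let $n\ge 2$ participants be partitioned as $[n]=H\sqcup C$ with $H\neq\emptyset$ (honest participants $H$, corrupt participants $C$). Suppose each participant $i$ holds one qubit $Q_i$, and the joint state of $Q_1,\dots,Q_n$ together with any auxiliary systems controlled by the corrupt participants is arbitrary (possibly entangled, and, after purifying into the corrupt participants' systems, assumed pure). Entanglement verification proceeds as follows: each honest participant $i\in H$ prepares $n-1$ fresh qubits in $\lvert 0\rangle$, applies a controlled-NOT with $Q_i$ as control and each fresh qubit as target, and sends one of these pseudo-copies to each other participant $j\neq i$; each corrupt participant sends to each honest participant an arbitrary qubit of its choice (possibly entangled with anything). Each honest participant $i$ then holds $n$ qubits ($Q_i$ and one qubit received from each $j\neq i$) and performs the two-outcome projective measurement $\{\Pi,\,I-\Pi\}$, where $\Pi$ is the projector onto $\mathrm{span}\{\lvert 0^n\rangle,\lvert 1^n\rangle\}$. If every honest participant obtains the outcome $\Pi$ (verification succeeds), then the post-measurement joint state is of the form $$\alpha\,\lvert 00\ldots 0\rangle_H\lvert\psi_0\rangle_C+\beta\,\lvert 11\ldots 1\rangle_H\lvert\psi_1\rangle_C,$$ where the subsystem $H$ consists of all qubits in the possession of the honest participants, the subsystem $C$ consists of all other systems (those held by corrupt participants, including pseudo-copies sent to them and their auxiliary systems), $\lvert\psi_0\rangle,\lvert\psi_1\rangle$ are unit vectors, and $\alpha,\beta\in\mathbb{C}$ satisfy $|\alpha|^2+|\beta|^2=1$. In particular this state is invariant under any permutation of the honest participants.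
   Context: Computational basis $\{\lvert 0\rangle,\lvert1\rangle\}$; $\lvert 0^n\rangle=\lvert 0\cdots0\rangle$, $\lvert 1^n\rangle=\lvert1\cdots1\rangle$ on $n$ qubits. A controlled-NOT applied to a target in $\lvert0\rangle$ creates a ''pseudo-copy'' of the control qubit in the computational basis. Communication between participants is over private authenticated quantum channels. *)

From HB Require Import structures.
From mathcomp Require Import all_boot all_order all_algebra all_fingroup all_field.
Set Implicit Arguments. Unset Strict Implicit. Unset Printing Implicit Defensive.
Import Order.TTheory GRing.Theory Num.Theory.
Local Open Scope ring_scope.

(* Participants are 'I_n; H : {set 'I_n} is the honest set, C = ~: H. *)
Definition honT (n : nat) (H : {set 'I_n}) : finType := {i : 'I_n | i \in H}.
Definition corT (n : nat) (H : {set 'I_n}) : finType := {j : 'I_n | j \notin H}.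

(* A vector of a finite-dimensional Hilbert space with computational basis
   T is an amplitude function T -> algC. *)
Definition sqnorm (T : finType) (v : T -> algC) : algC := \sum_(x : T) `|v x| ^+ 2.
Definition unit_vec (T : finType) (v : T -> algC) : Prop := sqnorm v = 1.

(* Basis of Q_1..Q_n (split as honest/corrupt qubits) (x) corrupt auxiliary A. *)
Definition QBasis n (H : {set 'I_n}) (A : finType) : finType :=
  (({ffun honT H -> bool} * {ffun corT H -> bool}) * A)%type.

(* Basis of the corrupt participants' input to their (arbitrary) operation:
   their own qubits Q_j, the auxiliary A, and the pseudo-copies received:
   entry  p j i  = pseudo-copy sent by honest i to corrupt j. *)
Definition CInBasis n (H : {set 'I_n}) (A : finType) : finType :=
  (({ffun corT H -> bool} * A) * {ffun corT H -> {ffun honT H -> bool}})%type.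

(* Basis of the corrupt output: entry r j i = qubit sent by corrupt j to
   honest i; B = all remaining systems kept by the corrupt participants. *)
Definition COutBasis n (H : {set 'I_n}) (B : finType) : finType :=
  ({ffun corT H -> {ffun honT H -> bool}} * B)%type.

(* Registers of the honest participants after communication: honest i holds
   n qubits  h i j  (j : 'I_n), where h i i is Q_i and, for j <> i, h i j is
   the qubit received from participant j. *)
Definition HReg n (H : {set 'I_n}) : finType := {ffun honT H -> {ffun 'I_n -> bool}}.

Definition FBasis n (H : {set 'I_n}) (B : finType) : finType := (HReg H * B)%type.

(* The corrupt operation, purified, is an isometry V : C_in -> C_out,
   given by its matrix entries V o u. *)
Definition is_isometry n (H : {set 'I_n}) (A B : finType)
  (V : COutBasis H B -> CInBasis H A -> algC) : Prop :=
  forall u u' : CInBasis H A,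
    \sum_(o : COutBasis H B) (V o u)^* * V o u' = (u == u')%:R.

(* Honest i applies CNOT(Q_i -> fresh |0>) for each j <> i, i.e. each
   pseudo-copy equals x_i in the computational basis (CNOT|x>|0> = |x>|x>);
   copies to honest k are held by k, copies to corrupt j go into the
   corrupt input; the corrupt participants then apply V.  Writing the
   honest registers h, the amplitude of (h, b) is nonzero only if all the
   copies held by honest participants agree with the controls:
     h i k = h k k  for honest i, k,
   and then equals  sum_{x_C, a} V ((r, b)) ((x_C, a), p) * psi((x_H, x_C), a)
   with x_H i = h i i, p j i = x_H i, r j i = h i j. *)
Definition xH_of n (H : {set 'I_n}) (h : HReg H) : {ffun honT H -> bool} :=
  [ffun i => h i (val i)].
Definition copies_to_corrupt n (H : {set 'I_n}) (xh : {ffun honT H -> bool})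
  : {ffun corT H -> {ffun honT H -> bool}} := [ffun _ : corT H => xh].
Definition received_from_corrupt n (H : {set 'I_n}) (h : HReg H)
  : {ffun corT H -> {ffun honT H -> bool}} := [ffun j => [ffun i => h i (val j)]].
Definition honest_copies_ok n (H : {set 'I_n}) (h : HReg H) : bool :=
  [forall i : honT H, forall k : honT H, h i (val k) == h k (val k)].

Definition protocol_state n (H : {set 'I_n}) (A B : finType)
  (psi : QBasis H A -> algC) (V : COutBasis H B -> CInBasis H A -> algC)
  (z : FBasis H B) : algC :=
  let h := z.1 in let b := z.2 in
  if honest_copies_ok h then
    \sum_(xc : {ffun corT H -> bool}) \sum_(a : A)
       V (received_from_corrupt h, b) ((xc, a), copies_to_corrupt (xH_of h))
       * psi ((xH_of h, xc), a)
  else 0.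

(* Projector Pi onto span{|0^n>,|1^n>} for each honest participant's n qubits;
   the joint success projector is the product over honest participants. *)
Definition ghz_ok n (w : {ffun 'I_n -> bool}) : bool :=
  (w == [ffun=> false]) || (w == [ffun=> true]).
Definition success n (H : {set 'I_n}) (h : HReg H) : bool :=
  [forall i : honT H, ghz_ok (h i)].

Definition proj_success n (H : {set 'I_n}) (B : finType)
  (phi : FBasis H B -> algC) (z : FBasis H B) : algC :=
  if success z.1 then phi z else 0.

Definition post_state n (H : {set 'I_n}) (B : finType)
  (phi : FBasis H B -> algC) (z : FBasis H B) : algC :=
  proj_success phi z / sqrtC (sqnorm (proj_success phi)).

Definition hzero n (H : {set 'I_n}) : HReg H := [ffun _ => [ffun _ => false]].
Definition hone  n (H : {set 'I_n}) : HReg H := [ffun _ => [ffun _ => true]].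

(* Every qubit an honest participant keeps for itself or receives
   from another honest participant is a computational-basis copy of that
   participant's own qubit, so the protocol state is supported on honest
   registers whose honest-to-honest copies agree ([honest_copies_ok]).  The
   success projector further forces each honest register into 0^n or 1^n;
   both constraints together leave only the all-zero and the all-one honest
   register ([success_consistent_cases]).  Hence the projected state is
   supported on two honest basis values, so it splits into two corrupt-side
   vectors ([two_point_decomp]) whose squared norms add up to that of the
   whole state ([sqnorm_two_point]).  Normalising each part
   ([normalize_part]) gives alpha, beta, psi0, psi1; permutation invariance
   follows since relabelling honest participants fixes 0..0 and 1..1. *)
From HB Require Import structures.
From mathcomp Require Import all_boot all_order all_algebra all_fingroup all_field.
Set Implicit Arguments. Unset Strict Implicit. Unset Printing Implicit Defensive.
Import Order.TTheory GRing.Theory Num.Theory.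
Local Open Scope ring_scope.

Lemma sqnorm_ge0 (T : finType) (v : T -> algC) : 0 <= sqnorm v.
Proof. by apply: sumr_ge0 => x _; rewrite exprn_ge0. Qed.

Lemma sqnorm_eq0 (T : finType) (v : T -> algC) : sqnorm v = 0 -> forall x, v x = 0.
Proof.
move=> /psumr_eq0P v0 x; apply/eqP; rewrite -normr_eq0.
have /eqP : `|v x| ^+ 2 = 0 by rewrite v0 // => y _; rewrite exprn_ge0.
by rewrite expf_eq0.
Qed.

(* A vector of nonzero norm has a nonzero amplitude; in particular its basis
   is inhabited, which is needed to build unit vectors on it. *)
Lemma sqnorm_neq0_support (T : finType) (v : T -> algC) :
  sqnorm v != 0 -> exists x : T, v x != 0.
Proof.
move=> nz; apply/existsP; apply: contraNT nz => /existsPn v0.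
by rewrite /sqnorm big1 // => x _; move/negPn/eqP: (v0 x) => ->; rewrite normr0 expr0n.
Qed.

(* Normalisation: any vector g scaled by N != 0 is  alpha * p  with p a unit
   vector and |alpha|^2 = |g|^2 / |N|^2 (if g = 0, p is any basis vector). *)
Lemma normalize_part (T : finType) (t0 : T) (g : T -> algC) (N : algC) :
  N != 0 ->
  exists (alpha : algC) (p : T -> algC),
    [/\ unit_vec p, `|alpha| ^+ 2 = sqnorm g / `|N| ^+ 2
      & forall t, g t / N = alpha * p t].
Proof.
move=> Nnz; have [g0|gnz] := eqVneq (sqnorm g) 0.
  exists 0, (fun t => (t == t0)%:R); split.
  - rewrite /unit_vec /sqnorm (bigD1 t0) //= eqxx normr1 expr1n big1 ?addr0 //.
    by move=> t /negbTE ->; rewrite normr0 expr0n.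
  - by rewrite g0 normr0 expr0n mul0r.
  - by move=> t; rewrite sqnorm_eq0 // !mul0r.
set r := sqrtC (sqnorm g).
have r_ge0 : 0 <= r by rewrite sqrtC_ge0 sqnorm_ge0.
have r_nz : r != 0 by rewrite sqrtC_eq0.
have r2 : `|r| ^+ 2 = sqnorm g by rewrite ger0_norm // sqrtCK.
exists (r / N), (fun t => g t / r); split.
- rewrite /unit_vec /sqnorm.
  under eq_bigr => t _ do rewrite normrM normfV exprMn exprVn r2.
  by rewrite -mulr_suml mulfV.
- by rewrite normrM normfV exprMn exprVn r2.
- by move=> t; rewrite [RHS]mulrAC mulrCA mulfV ?mulr1.
Qed.

Section TwoPointSupport.
Variables (X T : finType) (x0 x1 : X) (f : X * T -> algC).
Hypothesis x0_neq_x1 : x0 != x1.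
Hypothesis f_supp : forall x t, x != x0 -> x != x1 -> f (x, t) = 0.

Lemma two_point_decomp x t :
  f (x, t) = (x == x0)%:R * f (x0, t) + (x == x1)%:R * f (x1, t).
Proof.
have [->|x_nx0] := eqVneq x x0; first by rewrite (negbTE x0_neq_x1) mul1r mul0r addr0.
have [->|x_nx1] := eqVneq x x1; first by rewrite mul0r mul1r add0r.
by rewrite !mul0r addr0 f_supp.
Qed.

Lemma sqnorm_two_point :
  sqnorm f = sqnorm (fun t => f (x0, t)) + sqnorm (fun t => f (x1, t)).
Proof.
have -> : sqnorm f = \sum_(x : X) \sum_(t : T) `|f (x, t)| ^+ 2.
  by rewrite pair_bigA; apply: eq_bigr => -[x t].
rewrite (bigD1 x0) //= (bigD1 x1) /=; last by rewrite eq_sym.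
rewrite [X in _ + (_ + X)]big1 ?addr0 // => x /andP [x_nx1 x_nx0].
by apply: big1 => t _; rewrite f_supp // normr0 expr0n.
Qed.

End TwoPointSupport.

Lemma hzero_neq_hone n (H : {set 'I_n}) : H != set0 -> hzero H != hone H.
Proof.
case/set0Pn => x Hx; apply/eqP => /(congr1 (fun h : HReg H => h (exist _ x Hx) x)).
by rewrite !ffunE.
Qed.

Lemma ghz_ok_const n (w : {ffun 'I_n -> bool}) j :
  ghz_ok w -> w = [ffun _ => w j].
Proof. by case/orP => /eqP ->; apply/ffunP => k; rewrite !ffunE. Qed.

Lemma success_consistent_cases n (H : {set 'I_n}) (h : HReg H) :
  H != set0 -> success h -> honest_copies_ok h -> h = hzero H \/ h = hone H.
Proof.
case/set0Pn => x Hx /forallP succ /forallP ok; pose i0 : honT H := exist _ x Hx.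
have h_const i : h i = [ffun _ => h i0 (val i0)].
  by rewrite (ghz_ok_const (val i0) (succ i)); have /forallP /(_ i0) /eqP -> := ok i.
by case: (h i0 (val i0)) h_const => h_const; [right | left];
  apply/ffunP => i; rewrite h_const !ffunE.
Qed.

Lemma proj_success_supp n (H : {set 'I_n}) (A B : finType)
  (psi : QBasis H A -> algC) (V : COutBasis H B -> CInBasis H A -> algC)
  (h : HReg H) (b : B) :
  H != set0 -> h != hzero H -> h != hone H ->
  proj_success (protocol_state psi V) (h, b) = 0.
Proof.
move=> Hne h_n0 h_n1; rewrite /proj_success /protocol_state /=.
case: ifP => // succ; case: ifP => // ok.
by case: (success_consistent_cases Hne succ ok) => h_eq;
  [move: h_n0 | move: h_n1]; rewrite h_eq eqxx.
Qed.

Lemma relabel_const_eq n (H : {set 'I_n}) (s : {perm honT H}) (h : HReg H)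
  (c : bool) :
  ([ffun i => h (s i)] == [ffun _ => [ffun _ => c]]) = (h == [ffun _ => [ffun _ => c]]).
Proof.
apply/eqP/eqP => E; apply/ffunP => i; last by rewrite !ffunE E ffunE.
by have := congr1 (fun g : HReg H => g ((s^-1)%g i)) E; rewrite /= !ffunE permKV.
Qed.

Theorem lemma1 (n : nat) (H : {set 'I_n}) (A B : finType)
  (psi : QBasis H A -> algC) (V : COutBasis H B -> CInBasis H A -> algC) :
  (1 < n)%N -> H != set0 ->
  unit_vec psi -> is_isometry V ->
  sqnorm (proj_success (protocol_state psi V)) != 0 ->
  (exists (alpha beta : algC) (psi0 psi1 : B -> algC),
     unit_vec psi0 /\ unit_vec psi1 /\
     `|alpha| ^+ 2 + `|beta| ^+ 2 = 1 /\
     forall (h : HReg H) (b : B),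
       post_state (protocol_state psi V) (h, b) =
         alpha * (h == hzero H)%:R * psi0 b + beta * (h == hone H)%:R * psi1 b)
  /\
  (forall (s : {perm honT H}) (h : HReg H) (b : B),
     post_state (protocol_state psi V) ([ffun i => h (s i)], b) =
     post_state (protocol_state psi V) (h, b)).
Proof.
move=> _ Hne _ _ f_nz; set f := proj_success _ in f_nz *.
have x01 := hzero_neq_hone Hne.
have supp : forall h b, h != hzero H -> h != hone H -> f (h, b) = 0.
  by move=> h b; apply: proj_success_supp.
have [[_ b0] _] := sqnorm_neq0_support f_nz.
set N := sqrtC (sqnorm f).
have N_nz : N != 0 by rewrite sqrtC_eq0.
have N2 : `|N| ^+ 2 = sqnorm f by rewrite ger0_norm ?sqrtCK // sqrtC_ge0 sqnorm_ge0.
have [al [p0 [u0 al2 e0]]] := normalize_part b0 (fun b => f (hzero H, b)) N_nz.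
have [be [p1 [u1 be2 e1]]] := normalize_part b0 (fun b => f (hone H, b)) N_nz.
have decomp h b : post_state (protocol_state psi V) (h, b) =
    al * (h == hzero H)%:R * p0 b + be * (h == hone H)%:R * p1 b.
  rewrite /post_state -/f -/N (two_point_decomp x01 supp) mulrDl -!mulrA e0 e1.
  by congr (_ + _); rewrite mulrCA mulrA.
split.
  exists al, be, p0, p1; split; [done | split; [done | split; last exact: decomp]].
  by rewrite al2 be2 -mulrDl -(sqnorm_two_point x01 supp) N2 mulfV.
by move=> s h b; rewrite !decomp /hzero /hone !relabel_const_eq.
Qed.
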